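(* For every finite preordered set $C$ and every prime power $q$, $\rho_C(q)=\rho_{C^*}(q)$. In particular, for every tuple $(l_1,\dots,l_s)$ of nonnegative integers, $\rho_{(l_1,\dots,l_s)}(q)=\rho_{(l_s,\dots,l_1)}(q)$.
   Context: A preorder on a finite set $C$ is a reflexive transitive relation $\preccurlyeq$. Its dual $C^*$ is $C$ with $x\preccurlyeq' y$ iff $y\preccurlyeq x$. $M^C(q)$ is the ring of $C\times C$ matrices $(x_{ij})$ over $\mathbb{F}_q$ with $x_{ij}=0$ unless $i\preccurlyeq j$; $P^C(q)$ is its group of invertible elements and $N^C(q)$ its set of nilpotent elements; $\rho_C(q)$ is the number of orbits of $P^C(q)$ on $N^C(q)$ under conjugation. For a tuple $\mathbf l=(l_1,\dots,l_s)$, $\rho_{\mathbf l}(q)=\rho_C(q)$ for $C$ a disjoint union of blocks $B_1,\dots,B_s$ with $|B_i|=l_i$ and $x\preccurlyeq y$ iff $x\in B_i,y\in B_j$ with $i\le j$; equivalently, $\rho_{\mathbf l}(q)$ is the number of conjugacy orbits of invertible block upper triangular matrices with diagonal blocks of sizes $l_1,\dots,l_s$ on the nilpotent such matrices. *)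

From HB Require Import structures.
From mathcomp Require Import all_boot all_order all_algebra all_field.
From Stdlib Require Import ClassicalEpsilon.
Set Implicit Arguments. Unset Strict Implicit. Unset Printing Implicit Defensive.
Import GRing.Theory.
Local Open Scope ring_scope.

Definition is_preorder (C : finType) (r : rel C) : Prop :=
  reflexive r /\ transitive r.

Definition dual_rel (C : finType) (r : rel C) : rel C := fun x y => r y x.

Definition asbool (P : Prop) : bool :=
  if excluded_middle_informative P then true else false.

Definition idx_rel (C : finType) (r : rel C) : rel 'I_#|C| :=
  fun i j => r (enum_val i) (enum_val j).

Section Incidence.
Variables (F : finFieldType) (n : nat) (r : rel 'I_n).

Definition in_MC (A : 'M[F]_n) : bool := [forall i, forall j, ~~ r i j ==> (A i j == 0)].

Definition in_PC (A : 'M[F]_n) : bool :=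
  asbool (exists B : 'M[F]_n, [/\ in_MC B, A *m B = 1%:M & B *m A = 1%:M]) && in_MC A.

Definition in_NC (A : 'M[F]_n) : bool :=
  in_MC A && asbool (exists k : nat, A ^+ k = 0).

Definition PC_orbit (N : 'M[F]_n) : {set 'M[F]_n} :=
  [set N' | [exists g, in_PC g && (N' == g *m N *m invmx g)]].

Definition rho_idx : nat := #|[set PC_orbit N | N in [set N | in_NC N]]|.
End Incidence.

Definition rho (F : finFieldType) (C : finType) (r : rel C) : nat :=
  rho_idx F (idx_rel r).

(* Block preorder for a tuple l = (l_1,...,l_s): the index set is 'I_(sumn l),
   split into consecutive blocks of sizes l_1, ..., l_s; block l i is the
   (0-based) index of the block containing i. *)
Definition block (l : seq nat) (i : nat) : nat :=
  find (fun k => i < sumn (take k.+1 l))%N (iota 0 (size l)).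

Definition block_rel (l : seq nat) : rel 'I_(sumn l) :=
  fun i j => (block l i <= block l j)%N.

Definition rho_tuple (F : finFieldType) (l : seq nat) : nat :=
  rho F (@block_rel l).

From HB Require Import structures.
From mathcomp Require Import all_boot all_order all_algebra all_fingroup.
From mathcomp Require Import zify.
From Stdlib Require Import ClassicalEpsilon.
Set Implicit Arguments. Unset Strict Implicit. Unset Printing Implicit Defensive.
Import GRing.Theory.
Local Open Scope ring_scope.

(* Any injective map Phi on n x n
   matrices that carries N^C onto N^C' and intertwines the conjugation actions
   of P^C and P^C' induces a bijection between the orbit sets, hence
   rho_C = rho_C' (lemma [rho_transfer]).  Two such maps are used:
   - transposition A |-> A^T, which sends M^C onto M^{C*}; a conjugation
     g N g^-1 becomes (g^-1)^T N^T ((g^-1)^T)^-1, so rho_C = rho_{C*} for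
     every relation (lemma [rho_dual]); this is the first claim;
   - relabelling A |-> (A (s i) (s j))_{ij} along a permutation s, a ring
     automorphism, which shows that rho only depends on the isomorphism type
     of the relation (lemma [rho_iso]).
   For the second claim, the dual of the block preorder of (l_1,...,l_s) is
   isomorphic, through the order-reversing map i |-> N-1-i, to the block
   preorder of (l_s,...,l_1) (lemma [block_rel_rev]); so
   rho_l = rho_{l*} = rho_{rev l}. *)

Lemma asboolE (P : Prop) : asbool P = true <-> P.
Proof. by rewrite /asbool; case: excluded_middle_informative. Qed.

Section Transfer.
Variables (F : finFieldType) (n : nat).
Implicit Types (r : rel 'I_n) (A g h N : 'M[F]_n).

Lemma in_PCE r g : in_PC r g = [&& g \in unitmx, in_MC r g & in_MC r (invmx g)].
Proof.
rewrite /in_PC; case: (boolP (asbool _)) => [/asboolE [B [hB gB Bg]]|hn] /=.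
  have gu : g \in unitmx by case: (mulmx1_unit gB).
  have -> : invmx g = B by rewrite -[B](mulKmx gu) gB mulmx1.
  by rewrite gu hB andbT.
apply/esym/negbTE; apply: contra hn => /and3P[gu hg hi].
by apply/asboolE; exists (invmx g); rewrite mulmxV ?mulVmx.
Qed.

Lemma in_NC_transfer r r' (Phi : 'M[F]_n -> 'M[F]_n) :
    injective Phi -> Phi 0 = 0 -> (forall A k, Phi (A ^+ k) = Phi A ^+ k) ->
    (forall A, in_MC r' (Phi A) = in_MC r A) ->
  forall A, in_NC r' (Phi A) = in_NC r A.
Proof.
move=> inj Phi0 PhiX hM A; rewrite /in_NC hM; congr andb.
apply/idP/idP => /asboolE [k hk]; apply/asboolE; exists k.
  by apply: inj; rewrite PhiX hk Phi0.
by rewrite -PhiX hk Phi0.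
Qed.

Lemma rho_transfer r r' (Phi : 'M[F]_n -> 'M[F]_n) :
    injective Phi ->
    (forall A, in_NC r' (Phi A) = in_NC r A) ->
    (forall g, in_PC r g -> exists2 h, in_PC r' h &
       forall N, Phi (g *m N *m invmx g) = h *m Phi N *m invmx h) ->
    (forall h, in_PC r' h -> exists2 g, in_PC r g &
       forall N, Phi (g *m N *m invmx g) = h *m Phi N *m invmx h) ->
  rho_idx F r = rho_idx F r'.
Proof.
move=> inj hN fwd bwd; have [Psi PhiK PsiK] := injF_bij inj.
have orbitE N : PC_orbit r' (Phi N) = Phi @: PC_orbit r N.
  apply/setP => N'; rewrite inE; apply/existsP/imsetP.
  - case=> h /andP[hP /eqP ->]; have [g gP e] := bwd h hP.
    exists (g *m N *m invmx g); last by rewrite e.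
    by rewrite inE; apply/existsP; exists g; rewrite gP eqxx.
  - case=> M; rewrite inE => /existsP[g /andP[gP /eqP ->]] ->.
    by have [h hP e] := fwd g gP; exists h; rewrite hP e eqxx.
have nilE : [set N | in_NC r' N] = Phi @: [set N | in_NC r N].
  apply/setP => N'; rewrite inE; apply/idP/imsetP.
  - by move=> h; exists (Psi N'); rewrite ?inE -?hN PsiK.
  - by case=> M; rewrite inE => hM ->; rewrite hN.
have orbitsE : [set PC_orbit r' N | N in Phi @: [set N | in_NC r N]] =
    (fun O : {set 'M[F]_n} => Phi @: O) @: [set PC_orbit r N | N in [set N | in_NC r N]].
  by rewrite -!imset_comp; apply: eq_imset => N; rewrite /= orbitE.
by rewrite /rho_idx nilE orbitsE (card_imset _ (imset_inj inj)).
Qed.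
End Transfer.

Section Transpose.
Variables (F : finFieldType) (n : nat).
Implicit Types (r : rel 'I_n) (A g : 'M[F]_n).

Lemma in_MC_tr r A : in_MC (dual_rel r) A^T = in_MC r A.
Proof.
apply/forallP/forallP => h i; apply/forallP => j.
  by have := forallP (h j) i; rewrite mxE.
by rewrite mxE; exact: (forallP (h j) i).
Qed.

Lemma trmxX A k : (A ^+ k)^T = A^T ^+ k.
Proof.
elim: k => [|k IH]; first by rewrite !expr0 trmx1.
by rewrite exprS exprSr -!mulmxE trmx_mul IH.
Qed.

Lemma in_PC_tr_inv r g : in_PC r g -> in_PC (dual_rel r) (invmx g)^T.
Proof.
rewrite !in_PCE => /and3P[gu hg hi].
by rewrite unitmx_tr unitmx_inv gu -[invmx _^T]trmx_inv invmxK !in_MC_tr hg hi.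
Qed.

Lemma rho_idx_dual r : rho_idx F r = rho_idx F (dual_rel r).
Proof.
apply: (rho_transfer (Phi := trmx)) => [|A|g gP|h hP].
- exact: trmx_inj.
- by apply: in_NC_transfer; [exact: trmx_inj|exact: trmx0|exact: trmxX|exact: in_MC_tr].
- exists (invmx g)^T; first exact: in_PC_tr_inv.
  by move=> N; rewrite trmx_inv invmxK !trmx_mul trmx_inv mulmxA.
- exists (invmx h)^T; first exact: in_PC_tr_inv hP.
  by move=> N; rewrite trmx_inv invmxK !trmx_mul trmx_inv !trmxK mulmxA.
Qed.
End Transpose.

Lemma rho_dual (F : finFieldType) (C : finType) (r : rel C) :
  rho F r = rho F (dual_rel r).
Proof. exact: rho_idx_dual. Qed.

Definition relabel_mx (F : finFieldType) n (s : {perm 'I_n}) (A : 'M[F]_n) : 'M[F]_n :=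
  \matrix_(i, j) A (s i) (s j).

Section Relabel.
Variables (F : finFieldType) (n : nat) (s : {perm 'I_n}).
Implicit Types (A B g : 'M[F]_n).
Local Notation P := (@relabel_mx F n s).

Lemma relabel_mxK A : relabel_mx s^-1 (P A) = A.
Proof. by apply/matrixP => i j; rewrite !mxE !permKV. Qed.

Lemma relabel_mx_inj : injective P.
Proof. by move=> A B /(congr1 (relabel_mx s^-1)); rewrite !relabel_mxK. Qed.

Lemma relabel_mxM A B : P (A *m B) = P A *m P B.
Proof.
apply/matrixP => i j; rewrite !mxE (reindex_inj (@perm_inj _ s)).
by apply: eq_bigr => k _; rewrite !mxE.
Qed.

Lemma relabel_mx1 : P 1%:M = 1%:M.
Proof. by apply/matrixP => i j; rewrite !mxE (inj_eq perm_inj). Qed.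

Lemma relabel_mx0 : P 0 = 0.
Proof. by apply/matrixP => i j; rewrite !mxE. Qed.

Lemma relabel_mxX A k : P (A ^+ k) = P A ^+ k.
Proof.
elim: k => [|k IH]; first by rewrite !expr0 relabel_mx1.
by rewrite !exprS -!mulmxE relabel_mxM IH.
Qed.

Lemma relabel_mx_inv g : g \in unitmx -> invmx (P g) = P (invmx g).
Proof.
move=> gu; have e : P g *m P (invmx g) = 1%:M.
  by rewrite -relabel_mxM mulmxV ?relabel_mx1.
have [Pgu _] := mulmx1_unit e.
by rewrite -[P (invmx g)](mulKmx Pgu) e mulmx1.
Qed.

Variables (r r' : rel 'I_n).
Hypothesis r'E : forall i j, r' i j = r (s i) (s j).

Lemma in_MC_relabel A : in_MC r' (P A) = in_MC r A.
Proof.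
apply/forallP/forallP => h i; apply/forallP => j.
  by have := forallP (h (s^-1 i)%g) (s^-1 j)%g; rewrite r'E mxE !permKV.
by rewrite r'E mxE; exact: (forallP (h (s i)) (s j)).
Qed.

Lemma in_PC_relabel g : in_PC r g -> in_PC r' (P g).
Proof.
rewrite !in_PCE => /and3P[gu hg hi].
rewrite relabel_mx_inv // !in_MC_relabel hg hi !andbT.
by have := congr1 P (mulmxV gu); rewrite relabel_mxM relabel_mx1 => /mulmx1_unit[].
Qed.
End Relabel.

Lemma rho_idx_perm (F : finFieldType) n (r r' : rel 'I_n) (s : {perm 'I_n}) :
  (forall i j, r' i j = r (s i) (s j)) -> rho_idx F r = rho_idx F r'.
Proof.
move=> r'E.
have rE i j : r i j = r' (s^-1 i)%g (s^-1 j)%g by rewrite r'E !permKV.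
apply: (rho_transfer (Phi := relabel_mx s)) => [|A|g gP|h hP].
- exact: relabel_mx_inj.
- apply: in_NC_transfer (in_MC_relabel r'E) A.
  + exact: relabel_mx_inj.
  + exact: relabel_mx0.
  + exact: relabel_mxX.
- exists (relabel_mx s g); first exact: in_PC_relabel.
  move: gP; rewrite in_PCE => /and3P[gu _ _] N.
  by rewrite !relabel_mxM relabel_mx_inv.
- have hs : relabel_mx s (relabel_mx s^-1 h) = h by rewrite -{1}[s]invgK relabel_mxK.
  have gP : in_PC r (relabel_mx s^-1 h) by apply: (in_PC_relabel rE).
  exists (relabel_mx s^-1 h) => // N.
  move: gP; rewrite in_PCE => /and3P[gu _ _].
  by rewrite !relabel_mxM -relabel_mx_inv // hs.
Qed.

Lemma rho_idx_bij (F : finFieldType) n m (r : rel 'I_n) (r' : rel 'I_m)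
    (sg : 'I_n -> 'I_m) :
  bijective sg -> (forall i j, r' (sg i) (sg j) = r i j) -> rho_idx F r = rho_idx F r'.
Proof.
move=> bsg sgE; have nm : n = m by have := bij_eq_card bsg; rewrite !card_ord.
subst m; pose p := perm (bij_inj bsg).
apply: (@rho_idx_perm F n r r' p^-1) => i j.
by rewrite -sgE -!(permE (bij_inj bsg)) !permKV.
Qed.

Lemma rho_iso (F : finFieldType) (C D : finType) (r : rel C) (r' : rel D) (f : C -> D) :
  bijective f -> (forall x y, r' (f x) (f y) = r x y) -> rho F r = rho F r'.
Proof.
move=> bf fE; apply: (@rho_idx_bij F _ _ _ _ (enum_rank \o f \o enum_val)).
  apply: inj_card_bij; last by rewrite !card_ord (bij_eq_card bf).
  by move=> i j /enum_rank_inj/(bij_inj bf)/enum_val_inj.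
by move=> i j; rewrite /idx_rel /= !enum_rankK fE.
Qed.

Section Blocks.
Local Open Scope nat_scope.
Local Notation T l k := (sumn (take k l)).

Lemma sumn_take_mono l a b : a <= b -> T l a <= T l b.
Proof. by move=> ab; rewrite -(subnKC ab) takeD sumn_cat leq_addr. Qed.

Lemma sumn_drop l k : sumn (drop k l) = sumn l - T l k.
Proof. by rewrite -[in sumn l](cat_take_drop k l) sumn_cat addKn. Qed.

Lemma block_spec l k i : k < size l -> T l k <= i < T l k.+1 -> block l i = k.
Proof.
move=> ks /andP[Tki iTk]; rewrite /block.
set P := fun k0 => i < T l k0.+1.
have hasP : has P (iota 0 (size l)) by apply/hasP; exists k; rewrite ?mem_iota.
have fs : find P (iota 0 (size l)) < size l.
  by move: hasP; rewrite has_find size_iota.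
case: (ltngtP (find P (iota 0 (size l))) k) => // c.
  have := nth_find 0 hasP; rewrite nth_iota // add0n /P => iT.
  by have := leq_trans iT (sumn_take_mono l c); rewrite ltnNge Tki.
by have := before_find 0 c; rewrite nth_iota // add0n /P iTk.
Qed.

Lemma block_bounds l i : i < sumn l ->
  block l i < size l /\ T l (block l i) <= i < T l (block l i).+1.
Proof.
move=> il; rewrite /block; set P := fun k0 => i < T l k0.+1.
have l0 : 0 < size l by case: (l) il.
have hasP : has P (iota 0 (size l)).
  apply/hasP; exists (size l).-1; first by rewrite mem_iota add0n leq0n ltn_predL.
  by rewrite /P prednK // take_size.
set k := find P _.
have ks : k < size l by move: hasP; rewrite has_find size_iota.
have iTk : i < T l k.+1 by have := nth_find 0 hasP; rewrite nth_iota // add0n.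
split => //; rewrite iTk andbT.
case ek: k ks iTk => [|k'] ks _; first by rewrite take0.
have /(before_find 0) : k' < k by rewrite ek.
by rewrite nth_iota ?(ltnW ks) // add0n /P => /negbT; rewrite -leqNgt.
Qed.

Lemma block_rev l i : i < sumn l ->
  block (rev l) (sumn l - i.+1) = size l - (block l i).+1.
Proof.
move=> il; have [ks /andP[Tki iTk]] := block_bounds il.
set k := block l i in ks Tki iTk *.
have TS : T l k.+1 <= sumn l.
  by rewrite -[in leqRHS](cat_take_drop k.+1 l) sumn_cat leq_addr.
apply: block_spec; first by rewrite size_rev; lia.
rewrite !take_rev !sumn_rev (subKn ks) (subnSK ks) (subKn (ltnW ks)) !sumn_drop.
apply/andP; split; lia.
Qed.
End Blocks.

Definition rev_idx (l : seq nat) (i : 'I_(sumn l)) : 'I_(sumn (rev l)) :=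
  cast_ord (esym (sumn_rev l)) (rev_ord i).

Lemma rev_idx_bij (l : seq nat) : bijective (@rev_idx l).
Proof.
apply: inj_card_bij; last by rewrite !card_ord sumn_rev.
by move=> x y /(congr1 val) e; apply/rev_ord_inj/val_inj.
Qed.

Lemma block_rel_rev (l : seq nat) (x y : 'I_(sumn l)) :
  @block_rel (rev l) (rev_idx x) (rev_idx y) = dual_rel (@block_rel l) x y.
Proof.
rewrite /block_rel /dual_rel /= !block_rev //.
have [bxs _] := block_bounds (ltn_ord x); have [bys _] := block_bounds (ltn_ord y).
by rewrite leq_sub2lE.
Qed.

Theorem mainTheorem16 :
  forall (F : finFieldType),
    (forall (C : finType) (r : rel C), is_preorder r -> rho F r = rho F (dual_rel r)) /\
    (forall l : seq nat, rho_tuple F l = rho_tuple F (rev l)).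
Proof.
move=> F; split; first by move=> C r _; apply: rho_dual.
move=> l; rewrite /rho_tuple rho_dual.
exact: rho_iso (rev_idx_bij l) (@block_rel_rev l).
Qed.
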